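(* Let $k$ be a field, $V$ a $k$-vector space and $\varphi,\psi\in\mathrm{End}_k(V)$ finite potent endomorphisms such that $(1+\varphi)(1+\psi)=1$. Then $\langle\varphi,\psi\rangle:=\varphi\,k[\varphi,\psi]+\psi\,k[\varphi,\psi]$ is a finite potent subspace of $\mathrm{End}_k(V)$.
   Context: An endomorphism $\varphi$ of $V$ is finite potent if $\varphi^nV$ is finite dimensional for some $n$. $k[\varphi,\psi]$ is the $k$-subalgebra of $\mathrm{End}_k(V)$ generated by $\varphi,\psi$. A subspace $F\subseteq\mathrm{End}_k(V)$ is finite potent if there is $n$ such that for any $\varphi_1,\dots,\varphi_n\in F$ the space $\varphi_1\cdots\varphi_nV$ is finite dimensional. *)

(* A k-vector space V (possibly infinite dimensional) is an
   lmodType over a fieldType k; endomorphisms are k-linear maps V -> V,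
   represented as functions together with linearity hypotheses. *)
From mathcomp Require Import all_boot all_order all_algebra.
Set Implicit Arguments. Unset Strict Implicit. Unset Printing Implicit Defensive.
Import GRing.Theory.
Local Open Scope ring_scope.

Definition findim_image (k : fieldType) (V : lmodType k) (f : V -> V) : Prop :=
  exists s : seq V, forall v : V,
    exists c : 'I_(size s) -> k, f v = \sum_(i < size s) c i *: s`_i.

Definition finite_potent (k : fieldType) (V : lmodType k) (phi : V -> V) : Prop :=
  exists n : nat, findim_image (iter n phi).

Inductive kalg (k : fieldType) (V : lmodType k) (phi psi : V -> V) : (V -> V) -> Prop :=
| kalg_id : kalg phi psi id
| kalg_phi : kalg phi psi phi
| kalg_psi : kalg phi psi psi
| kalg_add f g : kalg phi psi f -> kalg phi psi g -> kalg phi psi (fun v => f v + g v)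
| kalg_scale (a : k) f : kalg phi psi f -> kalg phi psi (fun v => a *: f v)
| kalg_comp f g : kalg phi psi f -> kalg phi psi g -> kalg phi psi (f \o g).

Definition gen_ideal (k : fieldType) (V : lmodType k) (phi psi : V -> V) (h : V -> V) : Prop :=
  exists a b : V -> V, kalg phi psi a /\ kalg phi psi b /\
    h = (fun v => phi (a v) + psi (b v)).

Definition finite_potent_subspace (k : fieldType) (V : lmodType k)
  (F : (V -> V) -> Prop) : Prop :=
  exists n : nat, forall fs : 'I_n -> (V -> V),
    (forall i, F (fs i)) ->
    findim_image (foldr (fun f g => f \o g) id [seq fs i | i <- enum 'I_n]).

(* Write S := 1 + psi and T := 1 + phi, so that T S = 1.  If phi^n V is finite
   dimensional, T is injective: a nonzero x with T x = 0 would give the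
   T-chain y_j := phi^n S^j x (T y_0 = 0, T y_(j+1) = y_j), which is linearly
   independent and lies in phi^n V.  Hence S = T^-1 commutes with T, so phi and
   psi commute, and psi = - phi S.  Every element phi a + psi b of <phi, psi>
   is therefore phi c with c := a - S b commuting with phi, and a product of n
   such elements is phi^n g for some g: its image lies in phi^n V. *)
From HB Require Import structures.
From mathcomp Require Import all_boot all_order all_algebra.
Import GRing.Theory.
Local Open Scope ring_scope.
Set Implicit Arguments. Unset Strict Implicit.

Section LinearMaps.
Variables (k : fieldType) (V : lmodType k).

Section LinearFun.
Variables (f : V -> V) (lf : linear f).

Let fL : {linear V -> V} := HB.pack f (GRing.isLinear.Build k V V *:%R f lf).

Lemma linf0 : f 0 = 0. Proof. exact: (linear0 fL). Qed.
Lemma linfD u v : f (u + v) = f u + f v. Proof. exact: (linearD fL u v). Qed.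
Lemma linfB u v : f (u - v) = f u - f v. Proof. exact: (linearB fL u v). Qed.
Lemma linfZ a u : f (a *: u) = a *: f u. Proof. exact: (linearZZ fL a u). Qed.
Lemma linf_sum n (F : 'I_n -> V) : f (\sum_(i < n) F i) = \sum_(i < n) f (F i).
Proof. exact: (linear_sum fL). Qed.

End LinearFun.

Lemma iter_linear (f : V -> V) n : linear f -> linear (iter n f).
Proof. by move=> lf; elim: n => [|n IH] a u v //=; rewrite IH lf. Qed.

Lemma span_dependent (s : seq V) (w : 'I_(size s).+1 -> V)
    (c : 'I_(size s).+1 -> 'I_(size s) -> k) :
    (forall j, w j = \sum_(i < size s) c j i *: s`_i) ->
  exists a : 'I_(size s).+1 -> k, (exists j, a j != 0) /\ \sum_j a j *: w j = 0.
Proof.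
set m := size s in w c *; move=> hw.
pose M := \matrix_(j < m.+1, i < m) c j i.
have ker_nz : kermx M != 0.
  rewrite kermx_eq0 /row_free; have := rank_leq_col M.
  by case: eqP => // ->; rewrite ltnn.
have [i0 [j0 nz]] : exists i0 j0, kermx M i0 j0 != 0.
  case: (pickP (fun p : 'I_m.+1 * 'I_m.+1 => kermx M p.1 p.2 != 0)) => [[i j] ? | none].
    by exists i, j.
  case/eqP: ker_nz; apply/matrixP => i j.
  by have /negbFE/eqP -> := none (i, j); rewrite mxE.
exists (fun j => kermx M i0 j); split; first by exists j0.
have ker_row i : \sum_j kermx M i0 j * c j i = 0.
  have := congr1 (fun A : 'M[k]_(m.+1, m) => A i0 i) (mulmx_ker M).
  rewrite mxE [X in _ = X]mxE => ker_eq; rewrite -[RHS]ker_eq.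
  by apply: eq_bigr => j _; rewrite [M j i]mxE.
under eq_bigr => j _ do rewrite hw scaler_sumr.
rewrite exchange_big /=; apply: big1 => i _.
under eq_bigr => j _ do rewrite scalerA.
by rewrite -scaler_suml ker_row scale0r.
Qed.

Lemma chain_free (T : V -> V) (y : nat -> V) : linear T ->
    T (y 0%N) = 0 -> (forall j, T (y j.+1) = y j) -> y 0%N != 0 ->
  forall J (a : 'I_J.+1 -> k), \sum_(i < J.+1) a i *: y i = 0 -> forall i, a i = 0.
Proof.
move=> lT Ty0 TyS y0_nz.
have head_coef (a : k) : a *: y 0%N = 0 -> a = 0.
  by move/eqP; rewrite scaler_eq0 (negbTE y0_nz) orbF => /eqP.
elim=> [|J IH] a; first by rewrite big_ord1 => /head_coef a0 i; rewrite (ord1 i).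
rewrite big_ord_recl => Ha.
have a_lift i : a (lift ord0 i) = 0.
  apply: (IH (fun i => a (lift ord0 i))).
  have := congr1 T Ha; rewrite (linfD lT) (linfZ lT) Ty0 scaler0 add0r.
  rewrite (linf_sum lT) (linf0 lT).
  by under eq_bigr => j _ do rewrite (linfZ lT) lift0 TyS.
rewrite big1 ?addr0 in Ha; last by move=> i _; rewrite a_lift scale0r.
by move=> i; case: (unliftP ord0 i) => [j ->|->]; [exact: a_lift | exact: head_coef].
Qed.

End LinearMaps.

Lemma foldr_comp_factor (T : Type) (phi : T -> T) n (fs : 'I_n -> T -> T) :
    (forall i, exists c : T -> T, (forall v, c (phi v) = phi (c v)) /\
       forall v, fs i v = phi (c v)) ->
  forall r : seq 'I_n, exists g : T -> T, forall v,
    foldr (fun f g => f \o g) id [seq fs i | i <- r] v = iter (size r) phi (g v).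
Proof.
move=> fs_factor; elim=> [|i r [g Hg]]; first by exists id.
have [c [c_comm fsE]] := fs_factor i.
have c_iter m v : c (iter m phi v) = iter m phi (c v).
  by elim: m => //= m IH; rewrite c_comm IH.
by exists (c \o g) => v /=; rewrite fsE Hg c_iter.
Qed.

Section OneAddInjective.
Variables (k : fieldType) (V : lmodType k) (phi S : V -> V).
Hypotheses (lin_phi : linear phi) (fp_phi : finite_potent phi).
Hypothesis S_rinv : forall w, S w + phi (S w) = w.

Let T v := v + phi v.

Let lin_T : linear T.
Proof. by move=> a u v; rewrite /T lin_phi scalerDr addrACA. Qed.

Lemma one_add_finite_potent_inj x : x + phi x = 0 -> x = 0.
Proof.
move=> Tx; apply/eqP/negP => /negP x_nz.
have [n [s hs]] := fp_phi.
have lin_phin := iter_linear n lin_phi.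
have T_iter w : T (iter n phi w) = iter n phi (T w).
  by rewrite /T (linfD lin_phin) -iterSr iterS.
pose y j := iter n phi (iter j S x).
have Ty0 : T (y 0%N) = 0 by rewrite T_iter [T x]Tx; exact: linf0.
have TyS j : T (y j.+1) = y j by rewrite T_iter iterS /T S_rinv.
have y0_nz : y 0%N != 0.
  have phix : phi x = - x by apply/eqP; rewrite -addr_eq0 addrC Tx.
  have -> : y 0%N = (-1) ^+ n *: x.
    rewrite /y /=; elim: (n) => [|m IH]; first by rewrite scale1r.
    by rewrite iterS IH (linfZ lin_phi) phix exprS scalerN -scaleNr mulN1r.
  by rewrite scaler_eq0 signr_eq0.
have [c Hc] := fin_all_exists (fun j : 'I_(size s).+1 => hs (iter j S x)).
have [a [[j0 aj0] Ha]] := span_dependent (w := fun j : 'I_(size s).+1 => y j) Hc.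
by move: aj0; rewrite (chain_free lin_T Ty0 TyS y0_nz Ha) eqxx.
Qed.

Lemma one_add_finite_potent_linv v : S (v + phi v) = v.
Proof.
apply/eqP; rewrite -subr_eq0; apply/eqP/one_add_finite_potent_inj.
by rewrite -/(T _) (linfB lin_T) /T S_rinv subrr.
Qed.

End OneAddInjective.

Section OneAddInversePair.
Variables (k : fieldType) (V : lmodType k) (phi psi : V -> V).
Hypotheses (lin_phi : linear phi) (lin_psi : linear psi).
Hypothesis fp_phi : finite_potent phi.
Hypothesis one_add_inv : forall v, (v + psi v) + phi (v + psi v) = v.

Lemma psi_phi_comm v : psi (phi v) = phi (psi v).
Proof.
have linv := one_add_finite_potent_linv lin_phi fp_phi one_add_inv v.
have rinv := one_add_inv v.
rewrite (linfD lin_psi) in linv.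
rewrite (linfD lin_phi) in rinv.
apply: (addrI (v + phi v + psi v)).
by rewrite -[in LHS]addrA linv -{1}rinv !addrA (addrAC v (psi v)).
Qed.

Lemma psi_eq_opp_phi v : psi v = - phi (v + psi v).
Proof. by apply/eqP; rewrite -addr_eq0; apply/eqP/(addrI v); rewrite addr0 addrA. Qed.

Lemma kalg_comm_phi f : kalg phi psi f -> forall v, f (phi v) = phi (f v).
Proof.
elim=> [v | v | v | g h _ IHg _ IHh v | a g _ IHg v | g h _ IHg _ IHh v] //=.
- exact: psi_phi_comm.
- by rewrite IHg IHh (linfD lin_phi).
- by rewrite IHg (linfZ lin_phi).
- by rewrite IHh IHg.
Qed.

Lemma gen_ideal_factor h : gen_ideal phi psi h ->
  exists c : V -> V, (forall v, c (phi v) = phi (c v)) /\ forall v, h v = phi (c v).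
Proof.
move=> [a [b [ka [kb ->]]]].
exists (fun v => a v - (b v + psi (b v))); split=> v.
  rewrite (kalg_comm_phi ka) (kalg_comm_phi kb) psi_phi_comm.
  by rewrite (linfB lin_phi) (linfD lin_phi).
by rewrite (linfB lin_phi) -psi_eq_opp_phi.
Qed.

End OneAddInversePair.

Theorem proposition3p6 (k : fieldType) (V : lmodType k) (phi psi : V -> V)
  (lin_phi : linear phi) (lin_psi : linear psi)
  (fp_phi : finite_potent phi) (fp_psi : finite_potent psi)
  (h1 : forall v : V, (v + psi v) + phi (v + psi v) = v) :
  finite_potent_subspace (gen_ideal phi psi).
Proof.
have [n [s hs]] := fp_phi.
exists n => fs fs_ideal.
have [g Hg] := foldr_comp_factor
  (fun i => gen_ideal_factor lin_phi lin_psi fp_phi h1 (fs_ideal i)) (enum 'I_n).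
rewrite size_enum_ord in Hg.
exists s => v; have [c Hc] := hs (g v).
by exists c; rewrite Hg.
Qed.
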